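(* A Schröder permutation $\pi\in\mathcal{S}_n$ avoids $231$ if and only if (i) every diagram row of $\pi$ contains exactly one element of $\mathcal{E}(\pi)$, and (ii) every diagram column of $\pi$ contains at most one element of $\mathcal{E}(\pi)$.
   Context: A permutation avoids $\tau\in\mathcal{S}_k$ if no subsequence of length $k$ is in the same relative order as $\tau$. A Schröder permutation is one avoiding both $1243$ and $2143$. Represent $\pi\in\mathcal{S}_n$ by an $n\times n$ array, rows $i$ numbered top to bottom, columns $j$ left to right, with a dot in square $(i,\pi_i)$. The diagram $D(\pi)$ is the set of squares $(i,j)$ with $\pi_i>j$ and $\pi^{-1}(j)>i$. A diagram row (resp. diagram column) is a row (resp. column) of the array containing at least one square of $D(\pi)$. The essential set $\mathcal{E}(\pi)$ is the set of $(i,j)\in D(\pi)$ with $(i+1,j)\notin D(\pi)$ and $(i,j+1)\notin D(\pi)$ (squares outside the array count as not in $D(\pi)$). *)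

From mathcomp Require Import all_boot all_fingroup.
Set Implicit Arguments. Unset Strict Implicit. Unset Printing Implicit Defensive.

(* Permutations of size n are elements of 'S_n = {perm 'I_n}; rows/columns
   are indexed 0..n-1 (top-to-bottom / left-to-right); the dot of row i is in
   column pi i. *)

(* Pattern containment: tau is given in one-line notation as a seq nat
   (e.g. [:: 2; 3; 1] for 231).  pi contains tau iff there are positions
   f 0 < f 1 < ... < f (k-1) whose values are in the same relative order. *)
Definition contains_pattern n (pi : 'S_n) (tau : seq nat) : Prop :=
  exists f : 'I_(size tau) -> 'I_n,
    (forall a b : 'I_(size tau), a < b -> f a < f b) /\
    (forall a b : 'I_(size tau),
        (pi (f a) < pi (f b)) = (nth 0 tau a < nth 0 tau b)).

Definition avoids n (pi : 'S_n) (tau : seq nat) : Prop := ~ contains_pattern pi tau.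

Definition schroeder n (pi : 'S_n) : Prop :=
  avoids pi [:: 1; 2; 4; 3] /\ avoids pi [:: 2; 1; 4; 3].

(* (i, j) in the diagram D(pi): pi_i > j and pi^{-1}(j) > i.  Indices outside
   the array are never in the diagram. *)
Definition in_diagram n (pi : 'S_n) (i j : nat) : bool :=
  [exists x : 'I_n, exists y : 'I_n,
     [&& (x == i :> nat), (y == j :> nat), y < pi x & x < (pi^-1)%g y]].

Definition in_essential n (pi : 'S_n) (i j : nat) : bool :=
  [&& in_diagram pi i j, ~~ in_diagram pi i.+1 j & ~~ in_diagram pi i j.+1].

Definition diagram_row n (pi : 'S_n) (i : 'I_n) : bool :=
  [exists j : 'I_n, in_diagram pi i j].

Definition diagram_col n (pi : 'S_n) (j : 'I_n) : bool :=
  [exists i : 'I_n, in_diagram pi i j].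

From mathcomp Require Import all_boot all_fingroup.
From mathcomp Require Import zify.
Set Implicit Arguments. Unset Strict Implicit. Unset Printing Implicit Defensive.

(* An essential cell (i, j) sits at a descent pi(i+1) <= j < pi(i) of pi and at
   a descent pi^-1(j+1) <= i < pi^-1(j) of pi^-1.  If pi avoids 231, a diagram
   row i forces a descent at i, and the column between pi(i+1) and pi(i) where
   the dots pass from below row i to above it carries an essential cell; two
   essential cells in one row or one column directly produce a 231.
   Conversely, take an occurrence (a, b, c) of 231 with b - a minimal.  If no
   value of pi strictly between positions a and b is smaller than pi(c), the
   last ascent of pi between a and b starts a diagram row without an essential
   cell.  Otherwise such a position yields a descent of pi^-1 between pi(c) and
   pi(a) whose column either carries two essential cells or gives an occurrence
   (a', b, c) with a < a'. *)

Lemma nat_boundary (P : pred nat) x y : x <= y -> P x -> ~~ P y ->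
  exists j, [/\ x <= j, j < y, P j & ~~ P j.+1].
Proof.
elim: y => [|y IH] le_xy Px nPy.
  by move: le_xy Px; rewrite leqn0 => /eqP -> P0; rewrite P0 in nPy.
have le_xy' : x <= y.
  by move: le_xy; rewrite leq_eqVlt ltnS => /orP[/eqP x_eq|//]; rewrite -x_eq Px in nPy.
case: (boolP (P y)) => Py; first by exists y; split.
by have [j [? ? ? ?]] := IH le_xy' Px Py; exists j; split => //; lia.
Qed.

Lemma card_set_ord_le1 n (P : pred nat) :
  #|[set k : 'I_n | P k]| <= 1 <->
  (forall k1 k2, k1 < n -> k2 < n -> P k1 -> P k2 -> k1 = k2).
Proof.
split=> [/card_le1_eqP le1 k1 k2 lt1 lt2 P1 P2 | uniq].
  by have := le1 (Ordinal lt1) (Ordinal lt2); rewrite !inE => /(_ P1 P2) [].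
apply/card_le1_eqP => x y; rewrite !inE => Px Py.
by apply/val_inj; exact: (uniq _ _ (ltn_ord y) (ltn_ord x) Py Px).
Qed.

Lemma card_set_ord_gt0 n (P : pred nat) :
  0 < #|[set k : 'I_n | P k]| <-> exists2 k, k < n & P k.
Proof.
split=> [/card_gt0P[x] | [k lt_k Pk]]; first by rewrite inE; exists x.
by apply/card_gt0P; exists (Ordinal lt_k); rewrite inE.
Qed.

Section PermutationAsNatFunction.
Variables (m : nat) (pi : 'S_m.+1).
Local Notation n := m.+1.

(* [inord] sends out-of-range indices to 0, so both maps take values below n
   everywhere. *)
Definition pval i := nat_of_ord (pi (inord i)).
Definition pinv j := nat_of_ord ((pi^-1)%g (inord j)).

Lemma pval_lt i : pval i < n. Proof. exact: ltn_ord. Qed.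
Lemma pinv_lt j : pinv j < n. Proof. exact: ltn_ord. Qed.

Lemma pvalK i : i < n -> pinv (pval i) = i.
Proof. by move=> lt_i; rewrite /pinv /pval inord_val permK inordK. Qed.

Lemma pinvK j : j < n -> pval (pinv j) = j.
Proof. by move=> lt_j; rewrite /pinv /pval inord_val permKV inordK. Qed.

Lemma pval_inj i1 i2 : i1 < n -> i2 < n -> pval i1 = pval i2 -> i1 = i2.
Proof. by move=> lt1 lt2 eq12; rewrite -(pvalK lt1) -(pvalK lt2) eq12. Qed.

Lemma in_diagramE i j :
  in_diagram pi i j = [&& i < n, j < n, j < pval i & i < pinv j].
Proof.
rewrite /in_diagram; apply/existsP/idP => [[x /existsP[y]] | ].
  case/and4P=> /eqP <- /eqP <- lt_yx lt_xy.
  by rewrite /pval /pinv !inord_val !ltn_ord lt_yx lt_xy.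
case/and4P=> lt_i lt_j lt_ji lt_ij; exists (inord i); apply/existsP.
by exists (inord j); rewrite !inordK // !eqxx lt_ji lt_ij.
Qed.

Definition essential i j :=
  [/\ i.+1 < n, pval i.+1 <= j, j < pval i, i < pinv j & pinv j.+1 <= i].

Lemma essential_bounds i j : essential i j -> i.+1 < n /\ j.+1 < n.
Proof. by case=> ? ? ? ? ?; have := pval_lt i; lia. Qed.

Lemma in_essentialE i j : in_essential pi i j <-> essential i j.
Proof.
rewrite /in_essential !in_diagramE; split.
  case/and3P=> /and4P[lt_i lt_j lt_ji lt_ij] out_down out_right.
  have lt_i1 : i.+1 < n by have := pinv_lt j; lia.
  have lt_j1 : j.+1 < n by have := pval_lt i; lia.
  have le_down : pval i.+1 <= j.
    rewrite leqNgt; apply/negP => lt_down; move: out_down.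
    rewrite lt_i1 lt_j lt_down /= -leqNgt => le_ji.
    have eq_j : pinv j = i.+1 by lia.
    by have := pinvK lt_j; rewrite eq_j; lia.
  have le_right : pinv j.+1 <= i.
    rewrite leqNgt; apply/negP => lt_right; move: out_right.
    rewrite lt_i lt_j1 lt_right /= andbT -leqNgt => le_ij.
    have eq_i : pval i = j.+1 by lia.
    by have := pvalK lt_i; rewrite eq_i; lia.
  by split.
case=> lt_i1 le_down lt_ji lt_ij le_right.
have lt_j : j < n by have := pval_lt i; lia.
rewrite lt_j lt_ji lt_ij ltnW //=.
by apply/andP; split; apply/negP => /and3P[_ ? ?]; lia.
Qed.

Definition occ231 a b c :=
  [/\ a < b, b < c, c < n, pval c < pval a & pval a < pval b].

Definition has231 := exists a b c, occ231 a b c.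

Lemma contains231E : contains_pattern pi [:: 2; 3; 1] <-> has231.
Proof.
split=> [[F [F_incr F_val]] | [a [b [c [lt_ab lt_bc lt_c lt_ca lt_ab']]]]].
  pose o k (lt_k : k < 3) := Ordinal lt_k.
  exists (F (o 0 isT)), (F (o 1 isT)), (F (o 2 isT)).
  by rewrite /occ231 /pval !inord_val; split; rewrite ?ltn_ord ?F_val //; apply: F_incr.
exists (fun k : 'I_3 => inord (nth 0 [:: a; b; c] k)); split.
  by move=> [[|[|[|x]]] ?] [[|[|[|y]]] ?] //= _; rewrite !inordK //; lia.
rewrite /pval in lt_ca lt_ab'.
move=> [[|[|[|x]]] ?] [[|[|[|y]]] ?] //=; rewrite ?ltnn //;
  first [lia | apply/idP/idP => ?; lia | apply/negP => ?; lia].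
Qed.

Lemma two_essentials_in_column j r b :
  pinv j.+1 <= r -> r < b -> b < pinv j -> pval r <= j -> j < pval b ->
  exists i1 i2, [/\ i1 < i2, essential i1 j & essential i2 j].
Proof.
move=> le_r lt_rb lt_b le_rj lt_jb.
have lt_j1 : j.+1 < n by have := pval_lt b; lia.
have lt_pinv := pinv_lt j.
have [||i1 [? ? ? ?]] := nat_boundary (P := fun k => j < pval k) le_r.
- by rewrite pinvK.
- by rewrite -leqNgt.
have [|i2 [? ? ? ?]] := nat_boundary (P := fun k => j < pval k) (ltnW lt_b) lt_jb.
  by rewrite pinvK ?ltnn 1?ltnW.
by exists i1, i2; split; [lia | split | split]; lia.
Qed.

Section Avoiding231.
Hypothesis no231 : ~ has231.

Lemma essential_in_diagram_row i j :
  in_diagram pi i j -> exists j0, essential i j0.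
Proof.
rewrite in_diagramE => /and4P[lt_i lt_j lt_ji lt_ij].
have lt_i1 : i.+1 < n by have := pinv_lt j; lia.
have descent : pval i.+1 < pval i.
  rewrite ltn_neqAle; apply/andP; split.
    by apply/eqP => /pval_inj eq_i; have := eq_i lt_i1 lt_i; lia.
  rewrite leqNgt; apply/negP => ascent; apply: no231.
  exists i, i.+1, (pinv j); split; rewrite ?pinvK ?pinv_lt //.
  rewrite ltn_neqAle lt_ij andbT; apply/eqP => eq_i.
  by have := pinvK lt_j; rewrite -eq_i; lia.
have [||j0 [? ? ? above]] := nat_boundary (P := fun v => i < pinv v) (ltnW descent).
- by rewrite pvalK.
- by rewrite pvalK // ltnn.
by rewrite -leqNgt in above; exists j0; split => //; lia.
Qed.

Lemma essential_row_uniq i j1 j2 : essential i j1 -> essential i j2 -> j1 = j2.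
Proof.
wlog lt12 : j1 j2 / j1 < j2.
  move=> hwlog e1 e2; case: (ltngtP j1 j2) => [lt12|gt12|//].
    exact: hwlog lt12 e1 e2.
  exact/esym/(hwlog _ _ gt12 e2 e1).
case=> lt_i1 le_j1 _ _ le_i [_ _ lt_j2 _ _]; exfalso.
have eq_j1 : pval (pinv j1.+1) = j1.+1 by apply: pinvK; have := pval_lt i; lia.
apply: no231; exists (pinv j1.+1), i, i.+1; rewrite /occ231 eq_j1; split; try lia.
by rewrite ltn_neqAle le_i andbT; apply/eqP => eq_i; move: eq_j1; rewrite eq_i; lia.
Qed.

Lemma essential_col_uniq j i1 i2 : essential i1 j -> essential i2 j -> i1 = i2.
Proof.
wlog lt12 : i1 i2 / i1 < i2.
  move=> hwlog e1 e2; case: (ltngtP i1 i2) => [lt12|gt12|//].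
    exact: hwlog lt12 e1 e2.
  exact/esym/(hwlog _ _ gt12 e2 e1).
move=> e1 [lt_i2 _ lt_j lt_i2j _]; have [_ lt_j1] := essential_bounds e1.
case: e1 => _ _ _ _ le_i1; exfalso.
have eq_j := pinvK (ltnW lt_j1); have eq_j1 := pinvK lt_j1.
apply: no231; exists (pinv j.+1), i2, (pinv j); rewrite /occ231 eq_j eq_j1.
split; rewrite ?pinv_lt //; try lia.
rewrite ltn_neqAle lt_j andbT; apply/eqP => eq_i2.
by have := pvalK (ltnW lt_i2); rewrite -eq_i2; lia.
Qed.

End Avoiding231.

Section EssentialConditions.
Hypothesis row_essential : forall i j, in_diagram pi i j -> exists j0, essential i j0.
Hypothesis col_essential_uniq :
  forall j i1 i2, essential i1 j -> essential i2 j -> i1 = i2.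

(* The last ascent between a and b starts a diagram row (it contains the cell
   of column pi(c)) that has no descent and hence no essential cell. *)
Lemma occ231_gap a b c :
  occ231 a b c -> exists2 r, a < r < b & pval r < pval c.
Proof.
case=> lt_ab lt_bc lt_c lt_ca lt_ab'.
case: (boolP [exists r : 'I_n, (a < r < b) && (pval r < pval c)]).
  by case/existsP=> r /andP[? ?]; exists r.
move/existsPn=> no_gap; exfalso.
have [|i [le_ai lt_ib le_i gt_i1]] :=
  nat_boundary (P := fun v => pval v <= pval a) (ltnW lt_ab) (leqnn _).
  by rewrite -ltnNge.
have lt_i : i < n by lia.
have lt_ci : pval c < pval i.
  case: (ltngtP a i) => [lt_ai | | <-] //; last by lia.
  have := no_gap (Ordinal lt_i); rewrite /= lt_ai lt_ib /= -leqNgt leq_eqVlt.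
  by case/orP => // /eqP/pval_inj eq_ci; have := eq_ci lt_c lt_i; lia.
have [|j0 [_ ? ? _ _]] := @row_essential i (pval c).
  by rewrite in_diagramE lt_i pval_lt lt_ci pvalK //=; lia.
by move: gt_i1; rewrite -ltnNge; lia.
Qed.

(* A value below pi(c) between a and b forces a descent j of pi^-1 between
   pi(c) and pi(a) whose column would carry two essential cells unless
   pi^-1(j) < b; in that case pi^-1(j) replaces a. *)
Lemma occ231_shift a b c r :
  occ231 a b c -> a < r < b -> pval r < pval c -> exists2 a', a < a' & occ231 a' b c.
Proof.
case=> lt_ab lt_bc lt_c lt_ca lt_ab' /andP[lt_ar lt_rb] lt_rc.
have lt_r : r < n by lia.
have [||j [le_cj lt_ja lt_rj le_j1]] :=
  nat_boundary (P := fun v => r < pinv v) (ltnW lt_ca).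
- by rewrite pvalK //; lia.
- by rewrite pvalK //; lia.
rewrite -leqNgt in le_j1.
have lt_j : j < n by have := pval_lt a; lia.
have eq_j := pinvK lt_j.
have lt_jb : pinv j < b.
  case: (ltngtP (pinv j) b) => [//| lt_b | eq_b]; last by move: eq_j; rewrite eq_b; lia.
  have [||i1 [i2 [lt12 e1 e2]]] := two_essentials_in_column le_j1 lt_rb lt_b; try lia.
  by have := col_essential_uniq e1 e2; lia.
exists (pinv j); first by lia.
split; rewrite ?eq_j //; try lia.
rewrite ltn_neqAle le_cj andbT; apply/eqP => eq_cj.
by have := pvalK lt_c; rewrite eq_cj; lia.
Qed.

Lemma essential_conditions_avoid231 : ~ has231.
Proof.
case=> a [b [c]]; have [k] := ubnP (b - a); elim: k a => // k IH a lt_k occ.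
have [r /andP[lt_ar lt_rb] lt_rc] := occ231_gap occ.
have [a' lt_aa' occ'] := occ231_shift occ (introT andP (conj lt_ar lt_rb)) lt_rc.
by apply: (IH a') occ'; case: occ => *; lia.
Qed.

End EssentialConditions.

Lemma card_essential_row_eq1 (i : 'I_n) :
  #|[set j : 'I_n | in_essential pi i j]| = 1 <->
  (exists j, essential i j) /\ (forall j1 j2, essential i j1 -> essential i j2 -> j1 = j2).
Proof.
have lt_n j : essential i j -> j < n by case/essential_bounds => _ /ltnW.
split=> [card1 | [[j e] uniq]].
  have /card_set_ord_gt0[j _ /in_essentialE e] :
    0 < #|[set j : 'I_n | in_essential pi i j]| by rewrite card1.
  have /card_set_ord_le1 uniq :
    #|[set j : 'I_n | in_essential pi i j]| <= 1 by rewrite card1.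
  split=> [|j1 j2 e1 e2]; first by exists j.
  by apply: uniq; rewrite ?lt_n //; apply/in_essentialE.
apply/eqP; rewrite eqn_leq; apply/andP; split.
  by apply/card_set_ord_le1 => j1 j2 _ _ /in_essentialE e1 /in_essentialE /(uniq _ _ e1).
by apply/card_set_ord_gt0; exists j; rewrite ?lt_n //; apply/in_essentialE.
Qed.

Lemma card_essential_col_le1 (j : 'I_n) :
  #|[set i : 'I_n | in_essential pi i j]| <= 1 <->
  (forall i1 i2, essential i1 j -> essential i2 j -> i1 = i2).
Proof.
have lt_n i : essential i j -> i < n by case/essential_bounds => /ltnW.
have col_le1 := card_set_ord_le1 n (in_essential pi ^~ j).
split=> [/col_le1 uniq i1 i2 e1 e2 | uniq].
  by apply: uniq; rewrite ?lt_n //; apply/in_essentialE.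
by apply/col_le1 => i1 i2 _ _ /in_essentialE e1 /in_essentialE /(uniq _ _ e1).
Qed.

End PermutationAsNatFunction.

Theorem proposition3p11 (n : nat) (pi : 'S_n) :
  schroeder pi ->
  (avoids pi [:: 2; 3; 1] <->
   ((forall i : 'I_n, diagram_row pi i ->
       #|[set j : 'I_n | in_essential pi i j]| = 1) /\
    (forall j : 'I_n, diagram_col pi j ->
       #|[set i : 'I_n | in_essential pi i j]| <= 1))).
Proof.
move=> _; case: n pi => [|m] pi.
  by split=> [_ | _ [F _]]; [split=> -[] | case: (F ord0)].
rewrite /avoids contains231E; split=> [no231 | [rows cols]].
  split=> [i /existsP[j dij] | j _].
    apply/card_essential_row_eq1; split; first exact: essential_in_diagram_row dij.
    exact: essential_row_uniq.
  exact/card_essential_col_le1/essential_col_uniq.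
apply: essential_conditions_avoid231 => [i j dij | j i1 i2 e1 e2].
  move: (dij); rewrite in_diagramE => /and4P[lt_i lt_j _ _].
  have drow : diagram_row pi (Ordinal lt_i) by apply/existsP; exists (Ordinal lt_j).
  by case/card_essential_row_eq1: (rows _ drow).
have [/ltnW lt_i1 /ltnW lt_j] := essential_bounds e1.
have dcol : diagram_col pi (Ordinal lt_j).
  by apply/existsP; exists (Ordinal lt_i1); case/in_essentialE/and3P: e1.
by move/cols/card_essential_col_le1: dcol => /(_ i1 i2 e1 e2).
Qed.
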